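(* The enumeration of all maximal satisfying assignments of antimonotone Boolean formulas in conjunctive normal form is equivalent to \textsc{Transversal Hypergraph} under parsimonious reductions. In particular, there is a parsimonious reduction from \textsc{Transversal Hypergraph} to \textsc{Enumerate Maximal Satisfying WA3NS Assignments}.
   Context: A Boolean formula is antimonotone if all its literals are negative; it is 3-normalized if it is a conjunction of disjunctions of conjunctions of literals. Assignments are identified with the sets of variables set to true; a satisfying assignment is maximal if no proper superset of it is satisfying. A hypergraph is a non-empty finite vertex set $V$ with edges $\mathcal{H}\subseteq\mathcal{P}(V)$; $\mathrm{Tr}(\mathcal{H})$ is the set of inclusion-minimal sets $T\subseteq V$ meeting every edge. \textsc{Transversal Hypergraph}: given $(V,\mathcal{H})$, list $\mathrm{Tr}(\mathcal{H})$. \textsc{Enumerate Maximal Satisfying WA3NS Assignments}: given an antimonotone 3-normalized formula, list all its maximal satisfying assignments. An enumeration problem maps each instance $I$ to a finite solution set $\Pi(I)$; a parsimonious reduction from $\Pi$ to $\Pi'$ is a pair of polynomial-time computable functions $f,g$ such that for every instance $I$, $g(I,\cdot)$ is a bijection from $\Pi'(f(I))$ to $\Pi(I)$. *)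

From mathcomp Require Import all_boot.
Set Implicit Arguments. Unset Strict Implicit. Unset Printing Implicit Defensive.

(* Polynomial-time computability: Cobham's machine-independent class FP of   *)
(* functions on binary words (successors prepend a bit; recursion on         *)
(* notation on the first bit; limited by a bound already in the class).      *)
(* A k-ary function is a function on seq word, meaningful on lists of size k.*)
Definition word := seq bool.

Inductive FP : nat -> (seq word -> word) -> Prop :=
| FP_zero k : FP k (fun _ => [::])
| FP_succ (b : bool) : FP 1 (fun xs => b :: nth [::] xs 0)
| FP_proj k i : i < k -> FP k (fun xs => nth [::] xs i)
| FP_smash : FP 2 (fun xs => nseq (size (nth [::] xs 0) * size (nth [::] xs 1)) true)
| FP_comp k m (h : seq word -> word) (gs : nat -> seq word -> word) :
    FP m h -> (forall j, j < m -> FP k (gs j)) ->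
    FP k (fun xs => h [seq gs j xs | j <- iota 0 m])
| FP_rec k (g h0 h1 bd f : seq word -> word) :
    FP k g -> FP k.+2 h0 -> FP k.+2 h1 -> FP k.+1 bd ->
    (forall ys, size ys = k -> f ([::] :: ys) = g ys) ->
    (forall x ys, size ys = k -> f ((false :: x) :: ys) = h0 [:: x, f (x :: ys) & ys]) ->
    (forall x ys, size ys = k -> f ((true :: x) :: ys) = h1 [:: x, f (x :: ys) & ys]) ->
    (forall xs, size xs = k.+1 -> size (f xs) <= size (bd xs)) ->
    FP k.+1 f
| FP_ext k (f f' : seq word -> word) :
    FP k f -> (forall xs, size xs = k -> f' xs = f xs) -> FP k f'.

(* Encodings of structured data as words (self-delimiting, injective).       *)
Definition w_open : word := [:: true; false].
Definition w_close : word := [:: false; true].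
Definition enc_nat (n : nat) : word :=
  w_open ++ flatten (nseq n [:: true; true]) ++ w_close.
Definition enc_seq (T : Type) (e : T -> word) (s : seq T) : word :=
  w_open ++ flatten (map e s) ++ w_close.
Definition enc_pair (A B : Type) (ea : A -> word) (eb : B -> word) (p : A * B) : word :=
  w_open ++ ea p.1 ++ eb p.2 ++ w_close.

Record enum_problem := EnumProblem {
  ep_inst : Type;
  ep_sol : Type;
  ep_valid : ep_inst -> Prop;
  ep_sols : ep_inst -> ep_sol -> Prop;
  ep_enc_inst : ep_inst -> word;
  ep_enc_sol : ep_sol -> word }.

Definition parsimonious_reduction (P Q : enum_problem) : Prop :=
  exists (f : ep_inst P -> ep_inst Q) (g : ep_inst P -> ep_sol Q -> ep_sol P),
    (exists F, FP 1 F /\ forall I, ep_valid I ->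
        F [:: ep_enc_inst I] = ep_enc_inst (f I)) /\
    (exists G, FP 2 G /\ forall I s', ep_valid I -> ep_sols (f I) s' ->
        G [:: ep_enc_inst I; ep_enc_sol s'] = ep_enc_sol (g I s')) /\
    forall I, ep_valid I ->
      [/\ ep_valid (f I),
          (forall s', ep_sols (f I) s' -> ep_sols I (g I s')),
          (forall s1 s2, ep_sols (f I) s1 -> ep_sols (f I) s2 ->
              g I s1 = g I s2 -> s1 = s2) &
          (forall s, ep_sols I s -> exists2 s', ep_sols (f I) s' & g I s' = s)].

(* Subsets of {0,...,n-1} are represented canonically as strictly increasing *)
(* lists of naturals < n.                                                    *)
Definition is_subset_of_range (n : nat) (A : seq nat) : bool :=
  sorted ltn A && all (fun v => v < n) A.

(* Transversal Hypergraph.  Instance (n, E): V = {0,...,n-1} (n >= 1),      *)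
(* each edge a list of vertices (read as the set of its elements).           *)
Definition hyp_inst := (nat * seq (seq nat))%type.

Definition hyp_valid (I : hyp_inst) : Prop :=
  0 < I.1 /\ all (fun e => all (fun v => v < I.1) e) I.2.

Definition is_transversal (E : seq (seq nat)) (T : seq nat) : bool :=
  all (fun e => has (fun v => v \in T) e) E.

Definition in_Tr (I : hyp_inst) (T : seq nat) : Prop :=
  [/\ is_subset_of_range I.1 T, is_transversal I.2 T &
      forall T', is_subset_of_range I.1 T' -> {subset T' <= T} ->
        is_transversal I.2 T' -> {subset T <= T'}].

Definition TransversalHypergraph : enum_problem :=
  {| ep_inst := hyp_inst; ep_sol := seq nat;
     ep_valid := hyp_valid; ep_sols := in_Tr;
     ep_enc_inst := enc_pair enc_nat (enc_seq (enc_seq enc_nat));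
     ep_enc_sol := enc_seq enc_nat |}.

(* Antimonotone 3-normalized formulas: (n, F) with variables 0..n-1;        *)
(* F = list of clauses (conjunction), clause = list of terms (disjunction),  *)
(* term = list of variables x, standing for the conjunction of literals ~x.  *)
Definition wa3ns_inst := (nat * seq (seq (seq nat)))%type.

Definition wa3ns_valid (I : wa3ns_inst) : Prop :=
  all (fun c => all (fun t => all (fun v => v < I.1) t) c) I.2.

(* assignment A = set of variables set to true *)
Definition wa3ns_sat (F : seq (seq (seq nat))) (A : seq nat) : bool :=
  all (fun c => has (fun t => all (fun v => v \notin A) t) c) F.

Definition wa3ns_maxsat (I : wa3ns_inst) (A : seq nat) : Prop :=
  [/\ is_subset_of_range I.1 A, wa3ns_sat I.2 A &
      forall A', is_subset_of_range I.1 A' -> {subset A <= A'} ->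
        wa3ns_sat I.2 A' -> {subset A' <= A}].

Definition EnumMaxSatWA3NS : enum_problem :=
  {| ep_inst := wa3ns_inst; ep_sol := seq nat;
     ep_valid := wa3ns_valid; ep_sols := wa3ns_maxsat;
     ep_enc_inst := enc_pair enc_nat (enc_seq (enc_seq (enc_seq enc_nat)));
     ep_enc_sol := enc_seq enc_nat |}.

(* Antimonotone CNF formulas: (n, F), F = list of clauses, clause = list of  *)
(* variables x, standing for the disjunction of literals ~x.                 *)
Definition acnf_inst := (nat * seq (seq nat))%type.

Definition acnf_valid (I : acnf_inst) : Prop :=
  all (fun c => all (fun v => v < I.1) c) I.2.

Definition acnf_sat (F : seq (seq nat)) (A : seq nat) : bool :=
  all (fun c => has (fun v => v \notin A) c) F.

Definition acnf_maxsat (I : acnf_inst) (A : seq nat) : Prop :=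
  [/\ is_subset_of_range I.1 A, acnf_sat I.2 A &
      forall A', is_subset_of_range I.1 A' -> {subset A <= A'} ->
        acnf_sat I.2 A' -> {subset A' <= A}].

Definition EnumMaxSatAntiCNF : enum_problem :=
  {| ep_inst := acnf_inst; ep_sol := seq nat;
     ep_valid := acnf_valid; ep_sols := acnf_maxsat;
     ep_enc_inst := enc_pair enc_nat (enc_seq (enc_seq enc_nat));
     ep_enc_sol := enc_seq enc_nat |}.

From Pilot Require Import Defs.
From mathcomp Require Import all_boot zify.
Set Implicit Arguments. Unset Strict Implicit. Unset Printing Implicit Defensive.

(* Complementation in {0, ..., n-1} is an inclusion-reversing involution. It
   sends an assignment satisfying an antimonotone CNF (every clause contains a
   false variable) to a transversal of the hypergraph of its clauses (every
   edge meets the complement), and back, so it maps the maximal satisfying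
   assignments bijectively onto the minimal transversals. An antimonotone CNF
   is the 3-normalized formula whose terms are the singletons of its clauses.
   All maps involved act on the unary encodings by bounded loops, so they lie
   in Cobham's class FP; the main one computes the complement by a loop over
   j < n that tests whether the code of j occurs in the encoded solution. *)

(** * Complementation and duality *)

Definition complement n (s : seq nat) := [seq v <- iota 0 n | v \notin s].

Lemma mem_complement n s v : (v \in complement n s) = (v < n) && (v \notin s).
Proof. by rewrite mem_filter mem_iota andbC. Qed.

Lemma complement_range n s : is_subset_of_range n (complement n s).
Proof.
rewrite /is_subset_of_range sorted_filter ?iota_ltn_sorted //=; last exact: ltn_trans.
by apply/allP => v; rewrite mem_complement => /andP[].
Qed.

Lemma range_lt n A v : is_subset_of_range n A -> v \in A -> v < n.
Proof. by case/andP => _ /allP; apply. Qed.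

Lemma complementK n A : is_subset_of_range n A -> complement n (complement n A) = A.
Proof.
move=> rA; apply: (irr_sorted_eq ltn_trans ltnn).
- by case/andP: (complement_range n (complement n A)).
- by case/andP: rA.
move=> v; rewrite !mem_complement negb_and negbK.
by case vA: (v \in A); rewrite ?(range_lt rA vA) ?orbF ?andbN.
Qed.

Lemma subset_complement n A B :
  {subset A <= B} -> {subset complement n B <= complement n A}.
Proof.
move=> AB v; rewrite !mem_complement => /andP[-> vB].
by apply: contra vB; apply: AB.
Qed.

Lemma subset_complementI n A B : is_subset_of_range n A ->
  {subset complement n B <= complement n A} -> {subset A <= B}.
Proof.
move=> rA cBA v vA; apply/negPn/negP => vB.
have /cBA : v \in complement n B by rewrite mem_complement (range_lt rA vA).
by rewrite mem_complement vA andbF.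
Qed.

Lemma is_subset_of_range_widen m n A :
  m <= n -> is_subset_of_range m A -> is_subset_of_range n A.
Proof.
move=> mn /andP[sA /allP lt]; rewrite /is_subset_of_range sA.
by apply/allP => v /lt /leq_trans; apply.
Qed.

Section Duality.
Variables (n : nat) (E : seq (seq nat)).
Hypothesis E_range : all (fun e => all (fun v => v < n) e) E.

Lemma edge_lt e v : e \in E -> v \in e -> v < n.
Proof. by move=> eE; apply/allP: v; exact: (allP E_range e eE). Qed.

Lemma acnf_sat_complement T : acnf_sat E (complement n T) = Defs.is_transversal E T.
Proof.
apply: eq_in_all => e eE; apply: eq_in_has => v ve.
by rewrite mem_complement (edge_lt eE ve) negbK.
Qed.

Lemma transversal_complement A : Defs.is_transversal E (complement n A) = acnf_sat E A.
Proof.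
apply: eq_in_all => e eE; apply: eq_in_has => v ve.
by rewrite mem_complement (edge_lt eE ve).
Qed.

Lemma acnf_maxsat_complement A : acnf_maxsat (n, E) A -> in_Tr (n, E) (complement n A).
Proof.
case=> /= rA satA maxA; split=> //=; rewrite ?complement_range ?transversal_complement //.
move=> T rT sub trT; apply: (subset_complementI (complement_range n A)).
rewrite complementK //; apply: maxA; rewrite ?complement_range ?acnf_sat_complement //.
by rewrite -[A](complementK rA); apply: subset_complement.
Qed.

Lemma in_Tr_complement T : in_Tr (n, E) T -> acnf_maxsat (n, E) (complement n T).
Proof.
case=> /= rT trT minT; split=> //=; rewrite ?complement_range ?acnf_sat_complement //.
move=> A rA sub satA; apply: (subset_complementI rA).
rewrite complementK //; apply: minT; rewrite ?complement_range ?transversal_complement //.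
by rewrite -[T](complementK rT); apply: subset_complement.
Qed.

Lemma in_Tr_range m T : in_Tr (m, E) T -> is_subset_of_range n T.
Proof.
case=> /= rT trT minT; set T' := [seq v <- T | v < n].
have sub : {subset T' <= T} by move=> v; rewrite mem_filter => /andP[].
have trT' : Defs.is_transversal E T'.
  apply/allP => e eE; have /hasP [v ve vT] := allP trT e eE.
  by apply/hasP; exists v => //; rewrite mem_filter vT (edge_lt eE ve).
have rT' : is_subset_of_range m T'.
  case/andP: rT => sT /allP ltT; rewrite /is_subset_of_range sorted_filter //.
    by apply/allP => v /sub /ltT.
  exact: ltn_trans.
case/andP: rT => sT _; rewrite /is_subset_of_range sT.
by apply/allP => v /(minT T' rT' sub trT'); rewrite mem_filter => /andP[].
Qed.

Lemma in_Tr_widen m T : n <= m -> in_Tr (m, E) T <-> in_Tr (n, E) T.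
Proof.
move=> nm; split=> [trT | [/= rT trT minT]].
  have rT := in_Tr_range trT; case: trT => /= _ trT minT; split=> // T' rT'.
  exact: minT (is_subset_of_range_widen nm rT').
split=> //=; first exact: is_subset_of_range_widen rT.
move=> T' rT' sub; apply: minT => //; case/andP: rT' => sT' _.
by rewrite /is_subset_of_range sT'; apply/allP => v /sub /(range_lt rT).
Qed.

End Duality.

Definition singleton_terms (E : seq (seq nat)) := map (map (fun v => [:: v])) E.

Lemma wa3ns_sat_singleton_terms E A : wa3ns_sat (singleton_terms E) A = acnf_sat E A.
Proof.
rewrite /wa3ns_sat all_map; apply: eq_all => c /=.
by rewrite has_map; apply: eq_has => v /=; rewrite andbT.
Qed.

Lemma wa3ns_maxsat_singleton_terms n E A :
  wa3ns_maxsat (n, singleton_terms E) A <-> acnf_maxsat (n, E) A.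
Proof.
rewrite /wa3ns_maxsat /acnf_maxsat /= wa3ns_sat_singleton_terms.
split=> -[rA satA maxA]; split=> // A' rA' sub satA'; apply: maxA => //.
  by rewrite wa3ns_sat_singleton_terms.
by rewrite -wa3ns_sat_singleton_terms.
Qed.

Lemma wa3ns_valid_singleton_terms n E :
  all (fun e => all (fun v => v < n) e) E -> wa3ns_valid (n, singleton_terms E).
Proof.
move=> vE; rewrite /wa3ns_valid /singleton_terms /= all_map; apply: sub_all vE => e /=.
by rewrite all_map; apply: sub_all => v /= ->.
Qed.

(** * Polynomial bounds and closure properties of FP *)

Definition total_size (xs : seq word) := sumn (map size xs).

Lemma size_nth_total xs i : size (nth [::] xs i) <= total_size xs.
Proof.
elim: xs i => [|x xs IH] [|i] //=; rewrite /total_size /=; first exact: leq_addr.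
exact: leq_trans (IH i) (leq_addl _ _).
Qed.

Lemma size_nth_bound xs i : size (nth [::] xs i) <= (total_size xs).+2 ^ 1.
Proof. by rewrite expn1 (leq_trans (size_nth_total xs i)) // -addn2 leq_addr. Qed.

Lemma total_size_map (T : eqType) (g : T -> word) l B :
  (forall j, j \in l -> size (g j) <= B) -> total_size (map g l) <= size l * B.
Proof.
elim: l => [|j l IH] gB //=; rewrite /total_size /= mulSn.
by rewrite leq_add ?gB ?mem_head // IH // => i il; rewrite gB // inE il orbT.
Qed.

Lemma uniform_bound m (P : nat -> nat -> Prop) :
  (forall j d d', d <= d' -> P j d -> P j d') ->
  (forall j, j < m -> exists d, P j d) -> exists D, forall j, j < m -> P j D.
Proof.
move=> mono; elim: m => [|m IH] H; first by exists 0.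
have [D HD] : exists D, forall j, j < m -> P j D.
  by apply: IH => j jm; apply: H; exact: ltnW.
have [d Hd] := H m (ltnSn m).
exists (maxn D d) => j; rewrite ltnS leq_eqVlt => /orP [/eqP->|jm].
  exact: mono (leq_maxr _ _) Hd.
exact: mono (leq_maxl _ _) (HD j jm).
Qed.

Lemma leq_exp2rW a b e : a <= b -> a ^ e <= b ^ e.
Proof. by case: e => [|e] // ab; rewrite leq_exp2r. Qed.

Lemma leq_mul_expn_add2 s m D : m * s.+2 ^ D + 2 <= s.+2 ^ (D + m.+1).
Proof.
have X1 : 0 < s.+2 ^ D by rewrite expn_gt0.
have m2 : m.+2 <= s.+2 ^ m.+1.
  exact: leq_trans (ltn_expl m.+1 (isT : 1 < 2)) (leq_exp2rW _ _).
rewrite expnD; apply: leq_trans (leq_mul (leqnn _) m2); nia.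
Qed.

Lemma FP_size_poly k f : FP k f ->
  exists d, forall xs, size xs = k -> size (f xs) <= (total_size xs).+2 ^ d.
Proof.
elim => {k f}.
- by move=> k; exists 0.
- move=> b; exists 1 => xs _ /=; rewrite expn1 ltnS.
  exact: leq_trans (size_nth_total xs 0) (leqnSn _).
- by move=> k i _; exists 1 => xs _; exact: size_nth_bound.
- exists 2 => xs _; rewrite size_nseq expnS expn1.
  by apply: leq_mul; rewrite (leq_trans (size_nth_total _ _)) // -addn2 leq_addr.
- move=> k m h gs _ [dh Hh] _ Hgs.
  have [D HD] := uniform_bound (P := fun j d => forall xs, size xs = k ->
      size (gs j xs) <= (total_size xs).+2 ^ d)
    (fun j d d' dd' H xs sx => leq_trans (H xs sx) (leq_pexp2l (ltn0Sn _) dd')) Hgs.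
  exists ((D + m.+1) * dh) => xs sx.
  have sz : size [seq gs j xs | j <- iota 0 m] = m by rewrite size_map size_iota.
  apply: leq_trans (Hh _ sz) _; rewrite (expnM _ (D + m.+1)) leq_exp2rW //.
  apply: leq_trans (leq_mul_expn_add2 _ m D); rewrite addn2 !ltnS.
  rewrite -[X in X * _](size_iota 0 m); apply: total_size_map => j.
  by rewrite mem_iota add0n => /andP[_ jm]; apply: HD.
- move=> k g h0 h1 bd f _ _ _ _ _ _ _ [d Hd] _ _ _ Hb.
  by exists d => xs sx; apply: leq_trans (Hb xs sx) (Hd xs sx).
- by move=> k f f' _ [d Hd] E; exists d => xs sx; rewrite E //; exact: Hd.
Qed.

Definition FP1 (T : word -> word) := FP 1 (fun xs => T (nth [::] xs 0)).
Definition FP2 (T : word -> word -> word) :=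
  FP 2 (fun xs => T (nth [::] xs 0) (nth [::] xs 1)).
Definition FP3 (T : word -> word -> word -> word) :=
  FP 3 (fun xs => T (nth [::] xs 0) (nth [::] xs 1) (nth [::] xs 2)).

Lemma FP1_comp k T g : FP1 T -> FP k g -> FP k (fun xs => T (g xs)).
Proof. by move=> HT Hg; exact: (@FP_comp k 1 _ (fun _ => g) HT (fun j _ => Hg)). Qed.

Lemma FP2_comp k T g1 g2 : FP2 T -> FP k g1 -> FP k g2 ->
  FP k (fun xs => T (g1 xs) (g2 xs)).
Proof.
move=> HT H1 H2.
apply: (FP_ext (@FP_comp k 2 _ (fun j => if j == 0 then g1 else g2) HT _)) => //.
by case=> [|[|j]].
Qed.

Lemma FP3_comp k T g1 g2 g3 : FP3 T -> FP k g1 -> FP k g2 -> FP k g3 ->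
  FP k (fun xs => T (g1 xs) (g2 xs) (g3 xs)).
Proof.
move=> HT H1 H2 H3.
apply: (FP_ext (@FP_comp k 3 _
   (fun j => if j == 0 then g1 else if j == 1 then g2 else g3) HT _)) => //.
by case=> [|[|[|j]]].
Qed.

Lemma FP1_cons b : FP1 (cons b).
Proof. exact: FP_succ. Qed.

Lemma FP_const k w : FP k (fun _ => w).
Proof.
elim: w => [|b w IH]; first exact: FP_zero.
exact: FP1_comp (FP1_cons b) IH.
Qed.

Lemma FP_behead_args k f : FP k f -> FP k.+1 (fun xs => f (behead xs)).
Proof.
move=> Hf; apply: (FP_ext (@FP_comp k.+1 k _ (fun j xs => nth [::] xs j.+1) Hf _)).
  by move=> j jk; apply: FP_proj.
case=> [|x ys] //= [<-]; congr f.
by rewrite -{1}(mkseq_nth [::] ys) /mkseq; apply: eq_map.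
Qed.

Lemma FP2_cat : FP2 cat.
Proof.
have Hbd : FP 2 (fun xs => nseq (size (true :: nth [::] xs 0) *
                                 size (true :: nth [::] xs 1)) true).
  apply: (FP2_comp (T := fun a b => nseq (size a * size b) true)) FP_smash _ _.
    exact: FP1_comp (FP1_cons true) (FP_proj (isT : 0 < 2)).
  exact: FP1_comp (FP1_cons true) (FP_proj (isT : 1 < 2)).
apply: (FP_rec (g := fun xs => nth [::] xs 0)
   (h0 := fun xs => false :: nth [::] xs 1) (h1 := fun xs => true :: nth [::] xs 1)
   _ _ _ Hbd) => //.
- exact: FP_proj.
- exact: FP1_comp (FP1_cons false) (FP_proj (isT : 1 < 3)).
- exact: FP1_comp (FP1_cons true) (FP_proj (isT : 1 < 3)).
- by move=> xs _; rewrite size_nseq size_cat /=; nia.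
Qed.

Fixpoint cat_args k (xs : seq word) : word :=
  if k is k'.+1 then nth [::] xs 0 ++ cat_args k' (behead xs) else [:: true; true].

Lemma size_cat_args k xs : size xs = k -> size (cat_args k xs) = (total_size xs).+2.
Proof.
elim: k xs => [|k IH] [|x xs] //= [sx].
by rewrite size_cat IH // /total_size /= !addnS.
Qed.

Lemma FP_cat_args k : FP k (cat_args k).
Proof.
elim: k => [|k IH] /=; first exact: FP_const.
exact: FP2_comp FP2_cat (FP_proj (ltn0Sn k)) (FP_behead_args IH).
Qed.

Fixpoint power_word d k (xs : seq word) : word :=
  if d is d'.+1 then nseq (size (power_word d' k xs) * size (cat_args k xs)) true
  else cat_args k xs.

Lemma FP_power_word d k : FP k (power_word d k).
Proof.
elim: d => [|d IH] /=; first exact: FP_cat_args.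
exact: (FP2_comp (T := fun a b => nseq (size a * size b) true) FP_smash IH (FP_cat_args k)).
Qed.

Lemma size_power_word d k xs : size xs = k ->
  (total_size xs).+2 ^ d <= size (power_word d k xs).
Proof.
move=> sx; elim: d => [|d IH] /=; first by rewrite size_cat_args.
by rewrite size_nseq expnSr size_cat_args // leq_mul.
Qed.

Lemma FP_rec_poly k (g h0 h1 f : seq word -> word) d :
  FP k g -> FP k.+2 h0 -> FP k.+2 h1 ->
  (forall ys, size ys = k -> f ([::] :: ys) = g ys) ->
  (forall x ys, size ys = k -> f ((false :: x) :: ys) = h0 [:: x, f (x :: ys) & ys]) ->
  (forall x ys, size ys = k -> f ((true :: x) :: ys) = h1 [:: x, f (x :: ys) & ys]) ->
  (forall xs, size xs = k.+1 -> size (f xs) <= (total_size xs).+2 ^ d) ->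
  FP k.+1 f.
Proof.
move=> Hg H0 H1 E0 E1 E2 B; apply: (FP_rec Hg H0 H1 (FP_power_word d k.+1) E0 E1 E2).
by move=> xs sx; apply: leq_trans (B xs sx) (size_power_word d sx).
Qed.

(* A word is read as a boolean through its first bit; tests return [:: true]
   or [::]. *)
Definition ite (c a b : word) : word := if c is true :: _ then a else b.

Lemma FP3_ite : FP3 ite.
Proof.
apply: (@FP_rec_poly 2 (fun xs => nth [::] xs 1) (fun xs => nth [::] xs 3)
          (fun xs => nth [::] xs 2) _ 1) => //; try exact: FP_proj.
case=> [|c [|a [|b [|? ?]]]] // _; rewrite /ite /=.
by case: c => [|[] c];
  rewrite ?(size_nth_bound [:: _; a; b] 1) ?(size_nth_bound [:: _; a; b] 2).
Qed.

Lemma FP1_behead : FP1 behead.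
Proof.
apply: (@FP_rec_poly 0 (fun _ => [::]) (fun xs => nth [::] xs 0)
          (fun xs => nth [::] xs 0) _ 1) => //; try exact: FP_proj; try exact: FP_zero.
case=> [|x [|]] //= _; rewrite (leq_trans _ (size_nth_bound [:: x] 0)) //.
by rewrite size_behead leq_pred.
Qed.

Create HintDb FP_db.
#[export] Hint Resolve FP3_ite FP2_cat FP1_cons FP1_behead : FP_db.

Ltac solve_FP := repeat first
 [ exact: FP_const
 | (apply: FP_proj; done)
 | (apply: FP3_comp; first solve [eauto with FP_db nocore])
 | (apply: FP2_comp; first solve [eauto with FP_db nocore])
 | (apply: FP1_comp; first solve [eauto with FP_db nocore]) ].

(** * Word programs *)

Fixpoint wtake_ones (w : word) : word :=
  if w is b :: x then (if b then true :: wtake_ones x else [::]) else [::].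
Fixpoint wdrop_ones (w : word) : word :=
  if w is b :: x then (if b then wdrop_ones x else w) else [::].
Definition wnonempty (w : word) : word := if w is _ :: _ then [:: true] else [::].
Definition wnot (w : word) : word := ite (wnonempty w) [::] [:: true].
Definition wand (a b : word) : word := ite a b [::].
Fixpoint wdouble (w : word) : word :=
  if w is _ :: x then true :: true :: wdouble x else [::].
Fixpoint wodd (w : word) : word := if w is _ :: x then wnot (wodd x) else [::].
Fixpoint whalf (w : word) : word :=
  if w is _ :: x then ite (wodd x) (true :: whalf x) (whalf x) else [::].
Definition wdrop2 (w : word) := behead (behead w).
Definition wdrop4 (w : word) := wdrop2 (wdrop2 w).

Lemma size_wtake_ones w : size (wtake_ones w) <= size w.
Proof. by elim: w => [|[] w IH]. Qed.

Lemma size_wdrop_ones w : size (wdrop_ones w) <= size w.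
Proof. by elim: w => [|[] w IH] //=; exact: leqW. Qed.

Lemma size_wdrop2 w : size (wdrop2 w) <= size w.
Proof. by case: w => [|? [|? ?]] //=; rewrite leqW. Qed.

Lemma size_ite c a b n : size a <= n -> size b <= n -> size (ite c a b) <= n.
Proof. by case: c => [|[] ?]. Qed.

Lemma size_wodd w : size (wodd w) <= 1.
Proof. by elim: w => [|b w IH] //=; rewrite /wnot; case: (wodd w) => [|[] ?]. Qed.

Lemma size_whalf_le w : size (whalf w) <= size w.
Proof. by elim: w => [|b w IH] //=; case: (wodd w) => [|[] ?] //=; exact: leqW. Qed.

Lemma size_wdouble w : size (wdouble w) = (size w).*2.
Proof. by elim: w => [|b w IH] //=; rewrite IH doubleS. Qed.

Lemma FP1_wtake_ones : FP1 wtake_ones.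
Proof.
apply: (@FP_rec_poly 0 (fun _ => [::]) (fun _ => [::])
          (fun xs => true :: nth [::] xs 1) _ 1) => //; try exact: FP_zero.
  by solve_FP.
case=> [|x [|]] //= _; exact: leq_trans (size_wtake_ones x) (size_nth_bound [:: x] 0).
Qed.

Lemma FP1_wdrop_ones : FP1 wdrop_ones.
Proof.
apply: (@FP_rec_poly 0 (fun _ => [::]) (fun xs => false :: nth [::] xs 0)
          (fun xs => nth [::] xs 1) _ 1) => //; try exact: FP_zero; try by solve_FP.
case=> [|x [|]] //= _; exact: leq_trans (size_wdrop_ones x) (size_nth_bound [:: x] 0).
Qed.

Lemma FP1_wnonempty : FP1 wnonempty.
Proof.
apply: (@FP_rec_poly 0 (fun _ => [::]) (fun _ => [:: true])
          (fun _ => [:: true]) _ 1) => //; try exact: FP_const.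
by case=> [|[|? ?] [|]] //= _; rewrite expn1.
Qed.
#[export] Hint Resolve FP1_wtake_ones FP1_wdrop_ones FP1_wnonempty : FP_db.

Lemma FP1_wnot : FP1 wnot. Proof. by rewrite /FP1 /wnot; solve_FP. Qed.
Lemma FP2_wand : FP2 wand. Proof. by rewrite /FP2 /wand; solve_FP. Qed.
Lemma FP1_wdrop2 : FP1 wdrop2. Proof. by rewrite /FP1 /wdrop2; solve_FP. Qed.
#[export] Hint Resolve FP1_wnot FP2_wand FP1_wdrop2 : FP_db.
Lemma FP1_wdrop4 : FP1 wdrop4. Proof. by rewrite /FP1 /wdrop4; solve_FP. Qed.
#[export] Hint Resolve FP1_wdrop4 : FP_db.

Lemma FP1_wdouble : FP1 wdouble.
Proof.
apply: (@FP_rec_poly 0 (fun _ => [::]) (fun xs => true :: true :: nth [::] xs 1)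
          (fun xs => true :: true :: nth [::] xs 1) _ 2) => //; try exact: FP_zero;
  try by solve_FP.
case=> [|x [|]] //= _; rewrite size_wdouble /total_size /= addn0 -muln2; nia.
Qed.

Lemma FP1_wodd : FP1 wodd.
Proof.
apply: (@FP_rec_poly 0 (fun _ => [::]) (fun xs => wnot (nth [::] xs 1))
          (fun xs => wnot (nth [::] xs 1)) _ 1) => //; try exact: FP_zero; try by solve_FP.
by case=> [|x [|]] //= _; rewrite (leq_trans (size_wodd _)) // expn1.
Qed.
#[export] Hint Resolve FP1_wdouble FP1_wodd : FP_db.

Lemma FP1_whalf : FP1 whalf.
Proof.
pose h xs := ite (wodd (nth [::] xs 0)) (true :: nth [::] xs 1) (nth [::] xs 1).
apply: (@FP_rec_poly 0 (fun _ => [::]) h h _ 1) => //; try exact: FP_zero;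
  try by rewrite /h; solve_FP.
case=> [|x [|]] //= _; exact: leq_trans (size_whalf_le x) (size_nth_bound [:: x] 0).
Qed.
#[export] Hint Resolve FP1_whalf : FP_db.

Lemma size_iter_le (T : word -> word) n y :
  (forall y, size (T y) <= size y) -> size (iter n T y) <= size y.
Proof. by move=> H; elim: n => [|n IH] //=; exact: leq_trans (H _) IH. Qed.

Lemma FP2_iter_size (T : word -> word) : FP1 T -> (forall y, size (T y) <= size y) ->
  FP2 (fun c y => iter (size c) T y).
Proof.
move=> HT HS.
apply: (@FP_rec_poly 1 (fun xs => nth [::] xs 0) (fun xs => T (nth [::] xs 1))
          (fun xs => T (nth [::] xs 1)) _ 1) => //;
  try exact: FP_proj; try exact: FP1_comp HT (FP_proj (isT : 1 < 3)).
case=> [|c [|y [|? ?]]] //= _.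
exact: leq_trans (size_iter_le _ _ HS) (size_nth_bound [:: c; y] 1).
Qed.

Definition wdrop_size (a b : word) := iter (size a) behead b.
Definition weq_size (a b : word) :=
  wand (wnot (wnonempty (wdrop_size a b))) (wnot (wnonempty (wdrop_size b a))).

Lemma FP2_wdrop_size : FP2 wdrop_size.
Proof. by apply: (FP2_iter_size FP1_behead) => y; rewrite size_behead leq_pred. Qed.
#[export] Hint Resolve FP2_wdrop_size : FP_db.

Lemma FP2_weq_size : FP2 weq_size. Proof. by rewrite /FP2 /weq_size; solve_FP. Qed.
#[export] Hint Resolve FP2_weq_size : FP_db.

(* Counters are words read through their length: the body is run on the
   suffixes of c, shortest first, i.e. for j < size c (wloop_iota). *)
Fixpoint wloop (body : seq word -> word) (c : word) (ps : seq word) : word :=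
  if c is _ :: x then wloop body x ps ++ body (x :: ps) else [::].

Lemma wloop_iota body c ps (B : nat -> word) :
  (forall x, body (x :: ps) = B (size x)) ->
  wloop body c ps = flatten [seq B j | j <- iota 0 (size c)].
Proof.
move=> H; elim: c => [|b c IH] //.
rewrite [LHS]/= [size _]/= -addn1 iotaD map_cat flatten_cat IH H /=.
by rewrite cats0.
Qed.

Lemma size_wloop body c ps B :
  (forall x, size x <= size c -> size (body (x :: ps)) <= B) ->
  size (wloop body c ps) <= size c * B.
Proof.
elim: c => [|b c IH] H //=; rewrite size_cat mulSn addnC.
by rewrite leq_add ?H ?leqnSn // IH // => x xc; rewrite H // leqW.
Qed.

Lemma FP_skip_arg1 k (h : seq word -> word) : FP k.+1 h ->
  FP k.+2 (fun xs => h (nth [::] xs 0 :: drop 2 xs)).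
Proof.
move=> Hh; apply: (FP_ext (@FP_comp k.+2 k.+1 _
    (fun j xs => nth [::] xs (if j == 0 then 0 else j.+1)) Hh _)).
  by case=> [|j] jk; apply: FP_proj.
case=> [|x [|r ys]] //= [sy]; congr (h (x :: _)).
rewrite -[iota 1 k]/(iota (1 + 0) k) iotaDl -map_comp drop0.
by rewrite -{1}(mkseq_nth [::] ys) /mkseq sy; apply: eq_map.
Qed.

Lemma FP_wloop k body : FP k.+1 body ->
  FP k.+1 (fun xs => wloop body (nth [::] xs 0) (behead xs)).
Proof.
move=> Hb; have [d Hd] := FP_size_poly Hb.
have Hh : FP k.+2 (fun xs => nth [::] xs 1 ++ body (nth [::] xs 0 :: drop 2 xs)).
  exact: FP2_comp FP2_cat (FP_proj (isT : 1 < k.+2)) (FP_skip_arg1 Hb).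
apply: (@FP_rec_poly k (fun _ => [::]) _ _ _ d.+1 (FP_zero k) Hh Hh) => //;
  try by move=> x ys _ /=; rewrite drop0.
case=> [|c ps] //= [sp].
apply: leq_trans (size_wloop (B := (total_size (c :: ps)).+2 ^ d) _) _.
  move=> x xc; apply: leq_trans (Hd (x :: ps) _) _; first by rewrite /= sp.
  by apply: leq_exp2rW; rewrite /total_size /= !ltnS leq_add.
rewrite expnS leq_mul2r; apply/orP; right.
by rewrite /total_size /= -addn2 -addnA leq_addr.
Qed.

Lemma FP2_wloop body : FP 2 body -> FP2 (fun c z => wloop body c [:: z]).
Proof. by move=> Hb; apply: (FP_ext (FP_wloop Hb)); case=> [|c [|z [|? ?]]]. Qed.

Lemma FP3_wloop body : FP 3 body -> FP3 (fun c d z => wloop body c [:: d; z]).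
Proof. by move=> Hb; apply: (FP_ext (FP_wloop Hb)); case=> [|c [|d [|z [|? ?]]]]. Qed.

(** * Programs on the encodings *)

(* enc_nat v is 10 (11)^v 01; the leading 0 of the closing 01 of a list code
   stops the skipping. *)
Definition wskip_nat (w : word) := ite w (wdrop2 (wdrop_ones (wdrop2 w))) w.
Definition wskip_nats (c y : word) := iter (size c) wskip_nat y.
Definition wskip_edge (w : word) := ite w (wdrop2 (wskip_nats w (wdrop2 w))) w.
Definition wskip_edges (c y : word) := iter (size c) wskip_edge y.

Lemma size_wskip_nat w : size (wskip_nat w) <= size w.
Proof.
apply: size_ite => //; apply: leq_trans (size_wdrop2 _) _.
exact: leq_trans (size_wdrop_ones _) (size_wdrop2 _).
Qed.

Lemma size_wskip_edge w : size (wskip_edge w) <= size w.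
Proof.
apply: size_ite => //; apply: leq_trans (size_wdrop2 _) _.
exact: leq_trans (size_iter_le _ _ size_wskip_nat) (size_wdrop2 _).
Qed.

Lemma FP1_wskip_nat : FP1 wskip_nat. Proof. by rewrite /FP1 /wskip_nat; solve_FP. Qed.
Lemma FP2_wskip_nats : FP2 wskip_nats.
Proof. exact: FP2_iter_size FP1_wskip_nat size_wskip_nat. Qed.
#[export] Hint Resolve FP2_wskip_nats : FP_db.
Lemma FP1_wskip_edge : FP1 wskip_edge. Proof. by rewrite /FP1 /wskip_edge; solve_FP. Qed.
Lemma FP2_wskip_edges : FP2 wskip_edges.
Proof. exact: FP2_iter_size FP1_wskip_edge size_wskip_edge. Qed.
#[export] Hint Resolve FP2_wskip_edges : FP_db.

Definition wsingleton_head_nat (y : word) : word :=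
  ite y ([:: true; false; true; false] ++ wtake_ones (wdrop2 y) ++
         [:: false; true; false; true]) [::].
Definition wsingleton_nats (w : word) :=
  wloop (fun xs => wsingleton_head_nat (wskip_nats (nth [::] xs 0) (nth [::] xs 1)))
    w [:: w].

Lemma FP1_wsingleton_head_nat : FP1 wsingleton_head_nat.
Proof. by rewrite /FP1 /wsingleton_head_nat; solve_FP. Qed.
#[export] Hint Resolve FP1_wsingleton_head_nat : FP_db.

Lemma FP1_wsingleton_nats : FP1 wsingleton_nats.
Proof. by apply: FP2_comp (FP2_wloop _) (FP_proj _) (FP_proj _); solve_FP. Qed.
#[export] Hint Resolve FP1_wsingleton_nats : FP_db.

Definition wsingleton_head_edge (y : word) : word :=
  ite y ([:: true; false] ++ wsingleton_nats (wdrop2 y) ++ [:: false; true]) [::].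
Definition wsingleton_edges (w : word) :=
  wloop (fun xs => wsingleton_head_edge (wskip_edges (nth [::] xs 0) (nth [::] xs 1)))
    w [:: w].

Lemma FP1_wsingleton_head_edge : FP1 wsingleton_head_edge.
Proof. by rewrite /FP1 /wsingleton_head_edge; solve_FP. Qed.
#[export] Hint Resolve FP1_wsingleton_head_edge : FP_db.

Lemma FP1_wsingleton_edges : FP1 wsingleton_edges.
Proof. by apply: FP2_comp (FP2_wloop _) (FP_proj _) (FP_proj _); solve_FP. Qed.
#[export] Hint Resolve FP1_wsingleton_edges : FP_db.

Definition wsingleton_terms (w : word) : word :=
  [:: true; false; true; false] ++ wtake_ones (wdrop4 w) ++ [:: false; true; true; false] ++
  wsingleton_edges (wdrop4 (wdrop_ones (wdrop4 w))) ++ [:: false; true; false; true].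

Lemma FP1_wsingleton_terms : FP1 wsingleton_terms.
Proof. by rewrite /FP1 /wsingleton_terms; solve_FP. Qed.

Definition whead_nat_eq (d y : word) : word :=
  ite y (ite (weq_size (wtake_ones (wdrop2 y)) d) [:: true] [::]) [::].
(* enc_nat v carries 2v ones, hence the comparison with wdouble x. *)
Definition wmem (x w : word) :=
  wnonempty (wloop (fun xs => whead_nat_eq (nth [::] xs 1)
                                (wskip_nats (nth [::] xs 0) (nth [::] xs 2)))
               w [:: wdouble x; w]).

Lemma FP2_whead_nat_eq : FP2 whead_nat_eq.
Proof. by rewrite /FP2 /whead_nat_eq; solve_FP. Qed.
#[export] Hint Resolve FP2_whead_nat_eq : FP_db.

Lemma FP2_wmem : FP2 wmem.
Proof. by apply: FP1_comp FP1_wnonempty (FP3_comp (FP3_wloop _) _ _ _); solve_FP. Qed.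
#[export] Hint Resolve FP2_wmem : FP_db.

Definition compl_body (xs : seq word) : word :=
  ite (wmem (nth [::] xs 0) (nth [::] xs 1)) [::]
    ([:: true; false] ++ wdouble (nth [::] xs 0) ++ [:: false; true]).
Definition wcompl_upto (c w : word) := wloop compl_body c [:: w].

Lemma FP2_wcompl_upto : FP2 wcompl_upto.
Proof. by apply: FP2_wloop; rewrite /compl_body; solve_FP. Qed.
#[export] Hint Resolve FP2_wcompl_upto : FP_db.

(* An instance code starts with 10 10 (11)^n 01: halving the ones yields a
   counter of length n. *)
Definition wcomplement (inst sol : word) : word :=
  [:: true; false] ++ wcompl_upto (whalf (wtake_ones (wdrop4 inst))) (wdrop2 sol) ++
  [:: false; true].

Lemma FP2_wcomplement : FP2 wcomplement.
Proof. by rewrite /FP2 /wcomplement; solve_FP. Qed.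

Definition wsucc_vars (w : word) := [:: true; false; true; false; true; true] ++ wdrop4 w.

Lemma FP1_wsucc_vars : FP1 wsucc_vars.
Proof. by rewrite /FP1 /wsucc_vars; solve_FP. Qed.

Lemma flatten_nseq_11 v : flatten (nseq v [:: true; true]) = nseq v.*2 true.
Proof. by elim: v => //= v ->. Qed.

Lemma enc_natE v : enc_nat v = [:: true, false & nseq v.*2 true ++ [:: false; true]].
Proof. by rewrite /enc_nat flatten_nseq_11. Qed.

Lemma wtake_ones_nseq m r : wtake_ones (nseq m true ++ false :: r) = nseq m true.
Proof. by elim: m => //= m ->. Qed.

Lemma wdrop_ones_nseq m r : wdrop_ones (nseq m true ++ false :: r) = false :: r.
Proof. by elim: m. Qed.

Lemma wskip_nat_enc v r : wskip_nat (enc_nat v ++ r) = r.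
Proof. by rewrite enc_natE /wskip_nat /= /wdrop2 /= -catA wdrop_ones_nseq. Qed.

Lemma iter_skip_flatten (A : Type) (e : A -> word) (skip : word -> word) s r j :
  (forall a r, skip (e a ++ r) = r) -> (forall r, skip (false :: r) = false :: r) ->
  iter j skip (flatten (map e s) ++ false :: r) = flatten (map e (drop j s)) ++ false :: r.
Proof.
move=> skip_e skip_end; elim: j => [|j IH]; first by rewrite drop0.
rewrite iterS IH [drop j.+1 s]drop_behead iterS -drop_behead.
by case: (drop j s) => [|a s'] //=; rewrite -catA skip_e.
Qed.

Lemma flatten_iota_nth (A : Type) (a0 : A) (W : A -> word) s L :
  size s <= L ->
  flatten [seq (if j < size s then W (nth a0 s j) else [::]) | j <- iota 0 L] =
  flatten (map W s).
Proof.
move=> sL; rewrite -(subnKC sL) iotaD map_cat flatten_cat add0n.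
have tail_nil m i : size s <= i ->
    flatten [seq (if j < size s then W (nth a0 s j) else [::]) | j <- iota i m] = [::].
  by elim: m i => [|m IH] i si //=; rewrite ltnNge si IH // leqW.
rewrite (tail_nil _ (size s)) // cats0 -{4}(mkseq_nth a0 s) /mkseq -map_comp.
by congr flatten; apply/eq_in_map => j; rewrite mem_iota /= => ->.
Qed.

Lemma size_flatten_map_ge (A : Type) (e : A -> word) s :
  (forall a, 0 < size (e a)) -> size s <= size (flatten (map e s)).
Proof. by move=> e_gt0; elim: s => //= a s IH; rewrite size_cat -add1n leq_add. Qed.

Section LoopOverList.
Variables (A : Type) (a0 : A) (e : A -> word) (skip : word -> word).
Hypothesis skip_item : forall a w, skip (e a ++ w) = w.
Hypothesis skip_end : forall w, skip (false :: w) = false :: w.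
Hypothesis e_gt0 : forall a, 0 < size (e a).

Lemma wloop_skip_map (W : A -> word) (B : word -> word) body ps s r :
  let z := flatten (map e s) ++ false :: r in
  (forall x, body (x :: ps) = B (iter (size x) skip z)) ->
  (forall a w, B (e a ++ w) = W a) -> B (false :: r) = [::] ->
  wloop body z ps = flatten (map W s).
Proof.
move=> z body_B B_item B_end.
rewrite (@wloop_iota _ _ _ (fun j => if j < size s then W (nth a0 s j) else [::])).
  rewrite flatten_iota_nth // size_cat.
  exact: leq_trans (size_flatten_map_ge _ e_gt0) (leq_addr _ _).
move=> x; rewrite body_B /z (iter_skip_flatten _ _ _ skip_item skip_end).
case: ltnP => xs; last by rewrite drop_oversize.
by rewrite (drop_nth a0 xs) /= -catA B_item.
Qed.

End LoopOverList.

Lemma wsingleton_natsE s r :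
  wsingleton_nats (flatten (map enc_nat s) ++ false :: r) =
  flatten (map (fun v => enc_seq enc_nat [:: v]) s).
Proof.
apply: (wloop_skip_map 0 wskip_nat_enc) => // v w.
rewrite enc_natE /wsingleton_head_nat /= /wdrop2 /= -catA wtake_ones_nseq.
by rewrite /enc_seq /= cats0 flatten_nseq_11 -catA.
Qed.

Lemma wskip_edge_enc e r : wskip_edge (enc_seq enc_nat e ++ r) = r.
Proof.
rewrite /wskip_edge /enc_seq /= /wdrop2 /= -catA /wskip_nats.
rewrite (iter_skip_flatten _ _ _ wskip_nat_enc) // drop_oversize //= size_cat.
by rewrite !leqW // (leq_trans (@size_flatten_map_ge _ enc_nat e _)) ?leq_addr.
Qed.

Lemma wsingleton_edgesE E r :
  wsingleton_edges (flatten (map (enc_seq enc_nat) E) ++ false :: r) =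
  flatten (map (enc_seq (enc_seq enc_nat) \o map (fun v => [:: v])) E).
Proof.
apply: (wloop_skip_map [::] wskip_edge_enc) => // e w.
rewrite /wsingleton_head_edge /enc_seq /= /wdrop2 /= -catA wsingleton_natsE.
by rewrite -map_comp.
Qed.

Lemma wsingleton_termsE n E :
  wsingleton_terms (enc_pair enc_nat (enc_seq (enc_seq enc_nat)) (n, E)) =
  enc_pair enc_nat (enc_seq (enc_seq (enc_seq enc_nat))) (n, singleton_terms E).
Proof.
rewrite /wsingleton_terms /enc_pair /= flatten_nseq_11 /wdrop4 /wdrop2 /= -!catA.
rewrite wtake_ones_nseq wdrop_ones_nseq /= wsingleton_edgesE /enc_seq -map_comp /=.
by rewrite /w_close; congr (_ :: _ :: _ :: _ :: _ ++ _ :: _ :: _ :: _ :: flatten _ ++ _).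
Qed.

Lemma wnonempty_drop m (w : word) :
  wnonempty (drop m w) = if size w <= m then [::] else [:: true].
Proof.
case: leqP => [wm|]; first by rewrite drop_oversize.
by rewrite -subn_gt0 -size_drop; case: (drop m w).
Qed.

Lemma weq_sizeE a b : weq_size a b = if size a == size b then [:: true] else [::].
Proof.
rewrite /weq_size /wdrop_size -!drop_behead !wnonempty_drop eqn_leq.
by case: (size b <= size a); case: (size a <= size b).
Qed.

Lemma wmemE x s :
  wmem x (flatten (map enc_nat s) ++ [:: false; true]) =
  if size x \in s then [:: true] else [::].
Proof.
rewrite /wmem (@wloop_skip_map _ 0 _ _ wskip_nat_enc _ _
  (fun v => if v == size x then [:: true] else [::]) (whead_nat_eq (wdouble x))) //.
  by elim: s => //= v s IH; rewrite inE eq_sym; case: (size x == v).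
move=> v w; rewrite enc_natE /whead_nat_eq /= /wdrop2 /= -catA wtake_ones_nseq weq_sizeE.
by rewrite size_nseq size_wdouble -!muln2 eqn_mul2r; case: (v == size x).
Qed.

Lemma flatten_map_if_nil (A : Type) (f : A -> word) (p : pred A) l :
  flatten [seq (if p j then [::] else f j) | j <- l] = flatten (map f [seq j <- l | ~~ p j]).
Proof. by elim: l => //= a l IH; case: (p a); rewrite //= IH. Qed.

Lemma wcompl_uptoE c s :
  wcompl_upto c (flatten (map enc_nat s) ++ [:: false; true]) =
  flatten (map enc_nat (complement (size c) s)).
Proof.
rewrite /wcompl_upto (@wloop_iota _ _ _ (fun j => if j \in s then [::] else enc_nat j)).
  by rewrite flatten_map_if_nil.
move=> x; rewrite /compl_body /= wmemE.
have -> : wdouble x = nseq (size x).*2 true by elim: x => //= b x ->.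
by case: (size x \in s); rewrite // enc_natE.
Qed.

Lemma size_whalf w : size (whalf w) = (size w)./2.
Proof.
have wodd_odd v : wodd v = if odd (size v) then [:: true] else [::].
  by elim: v => //= b v ->; case: (odd (size v)).
elim: w => //= b w IH; rewrite wodd_odd uphalf_half.
by case: (odd (size w)); rewrite /= IH.
Qed.

Lemma wcomplementE (B : Type) (eb : B -> word) n E s :
  wcomplement (enc_pair enc_nat eb (n, E)) (enc_seq enc_nat s) =
  enc_seq enc_nat (complement n s).
Proof.
rewrite /wcomplement /enc_pair /= flatten_nseq_11 /wdrop4 /wdrop2 /= -!catA.
by rewrite wtake_ones_nseq wcompl_uptoE size_whalf size_nseq doubleK.
Qed.

Lemma wsucc_varsE (B : Type) (eb : B -> word) n E :
  wsucc_vars (enc_pair enc_nat eb (n, E)) = enc_pair enc_nat eb (n.+1, E).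
Proof. by rewrite /wsucc_vars /enc_pair /= !flatten_nseq_11 /wdrop4 /wdrop2 /= -!catA. Qed.

(** * The reductions *)

Lemma parsimonious_reduction_of_inverses (P Q : enum_problem)
    (f : ep_inst P -> ep_inst Q) (g : ep_inst P -> ep_sol Q -> ep_sol P)
    (h : ep_inst P -> ep_sol P -> ep_sol Q) (F : word -> word) (G : word -> word -> word) :
  FP1 F -> (forall I, ep_valid I -> F (ep_enc_inst I) = ep_enc_inst (f I)) ->
  FP2 G -> (forall I s', ep_valid I -> ep_sols (f I) s' ->
               G (ep_enc_inst I) (ep_enc_sol s') = ep_enc_sol (g I s')) ->
  (forall I, ep_valid I -> ep_valid (f I)) ->
  (forall I s', ep_valid I -> ep_sols (f I) s' -> ep_sols I (g I s') /\ h I (g I s') = s') ->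
  (forall I s, ep_valid I -> ep_sols I s -> ep_sols (f I) (h I s) /\ g I (h I s) = s) ->
  parsimonious_reduction P Q.
Proof.
move=> FP_F FE FP_G GE f_valid g_sol h_sol; exists f, g; split; [|split].
- by exists (fun xs => F (nth [::] xs 0)); split=> // I /FE.
- by exists (fun xs => G (nth [::] xs 0) (nth [::] xs 1)); split=> // I s' /GE; apply.
move=> I vI; split=> [||s1 s2 sol1 sol2 g12|s /(h_sol I s vI) [sol_h hK]].
- exact: f_valid.
- by move=> s' /(g_sol I s' vI) [].
- by have [_ <-] := g_sol I s1 vI sol1; have [_ <-] := g_sol I s2 vI sol2; rewrite g12.
- by exists (h I s).
Qed.

(* A hypergraph needs a vertex, so the variables 0..n-1 become vertices next
   to a dummy vertex n, which meets no edge and lies in no minimal transversal. *)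
Lemma acnf_to_hypergraph : parsimonious_reduction EnumMaxSatAntiCNF TransversalHypergraph.
Proof.
apply: (@parsimonious_reduction_of_inverses EnumMaxSatAntiCNF TransversalHypergraph
  (fun I => (I.1.+1, I.2))
  (fun I => complement I.1) (fun I => complement I.1) wsucc_vars wcomplement
  FP1_wsucc_vars _ FP2_wcomplement).
- by case=> n E _; rewrite /= wsucc_varsE.
- by case=> n E s' _ _; rewrite /= wcomplementE.
- by case=> n E vE; split=> //=; apply: sub_all vE => e; apply: sub_all => v /ltnW.
- case=> n E T vE /= /(in_Tr_widen vE _ (leqnSn n)) trT; split.
    exact: in_Tr_complement.
  by rewrite complementK //; case: trT.
- case=> n E A vE /= satA; split; last by rewrite complementK //; case: satA.
  by apply/(in_Tr_widen vE _ (leqnSn n)); exact: acnf_maxsat_complement.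
Qed.

Lemma hypergraph_to_acnf : parsimonious_reduction TransversalHypergraph EnumMaxSatAntiCNF.
Proof.
apply: (@parsimonious_reduction_of_inverses TransversalHypergraph EnumMaxSatAntiCNF id
  (fun I => complement I.1) (fun I => complement I.1) id wcomplement
  (FP_proj (isT : 0 < 1)) _ FP2_wcomplement) => //.
- by case=> n E s' _ _; rewrite /= wcomplementE.
- by case=> n E [].
- case=> n E A [_ vE] /= satA; split; first exact: acnf_maxsat_complement.
  by rewrite complementK //; case: satA.
- case=> n E T [_ vE] /= trT; split; first exact: in_Tr_complement.
  by rewrite complementK //; case: trT.
Qed.

Lemma hypergraph_to_wa3ns : parsimonious_reduction TransversalHypergraph EnumMaxSatWA3NS.
Proof.
apply: (@parsimonious_reduction_of_inverses TransversalHypergraph EnumMaxSatWA3NS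
  (fun I => (I.1, singleton_terms I.2))
  (fun I => complement I.1) (fun I => complement I.1) wsingleton_terms wcomplement
  FP1_wsingleton_terms _ FP2_wcomplement).
- by case=> n E _; rewrite /= wsingleton_termsE.
- by case=> n E s' _ _; rewrite /= wcomplementE.
- by case=> n E [_ /wa3ns_valid_singleton_terms].
- case=> n E A [_ vE] /= /wa3ns_maxsat_singleton_terms satA; split.
    exact: acnf_maxsat_complement.
  by rewrite complementK //; case: satA.
- case=> n E T [_ vE] /= trT; split; last by rewrite complementK //; case: trT.
  by apply/wa3ns_maxsat_singleton_terms; exact: in_Tr_complement.
Qed.

Theorem lemma14 :
  [/\ parsimonious_reduction EnumMaxSatAntiCNF TransversalHypergraph,
      parsimonious_reduction TransversalHypergraph EnumMaxSatAntiCNF &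
      parsimonious_reduction TransversalHypergraph EnumMaxSatWA3NS].
Proof.
split.
- exact: acnf_to_hypergraph.
- exact: hypergraph_to_acnf.
- exact: hypergraph_to_wa3ns.
Qed.
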